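(* For every signed permutation $\pi\in\mathfrak{B}_n$, \[\sum_{k\ge0}\Omega'_B(\pi;k)\,t^k=\frac{(1+t)^n}{(1-t)^{n+1}}\left(\frac{2t}{1+t}\right)^{\varsigma(\pi)}\left(\frac{4t}{(1+t)^2}\right)^{\operatorname{pe}_B(\pi)}=\left(\frac12\right)^{\varsigma(\pi)}\frac{(1+t)^{n+\varsigma(\pi)}}{(1-t)^{n+1}}\left(\frac{4t}{(1+t)^2}\right)^{\operatorname{pe}_B(\pi)+\varsigma(\pi)}.\]
   Context: $\mathfrak{B}_n$ is the group of signed permutations (bijections $\pi$ of $\{-n,\dots,n\}$ with $\pi(-i)=-\pi(i)$), written as words $(\pi(1),\dots,\pi(n))$, with $\pi(0)=0$. A peak of $\pi$ is a position $i\in\{1,\dots,n-1\}$ with $\pi(i-1)<\pi(i)>\pi(i+1)$, and $\operatorname{pe}_B(\pi)$ is the number of peaks. $\varsigma(\pi)=0$ if $\pi(1)>0$ and $\varsigma(\pi)=1$ if $\pi(1)<0$. For an integer $k\ge0$ let $Z_k$ be the totally ordered set $0<\bar1<1<\bar2<2<\dots<\bar k<k$, with $0$ and unbarred $j$ ''plus-type'' and barred $\bar j$ ''minus-type''. $\Omega'_B(\pi;k)$ is the number of sequences $(a_1,\dots,a_n)\in Z_k^n$ such that, with $a_0=0$, $a_0\le a_1\le\dots\le a_n$ and for every $s\in\{0,\dots,n-1\}$: if $\pi(s)<\pi(s+1)$ then $a_s<a_{s+1}$ or ($a_s=a_{s+1}$ is plus-type); if $\pi(s)>\pi(s+1)$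 then $a_s<a_{s+1}$ or ($a_s=a_{s+1}$ is minus-type). *)

From HB Require Import structures.
From mathcomp Require Import all_boot all_order all_algebra.
From mathcomp Require Import all_classical all_reals all_analysis.

Set Implicit Arguments.
Unset Strict Implicit.
Unset Printing Implicit Defensive.

Import Order.TTheory GRing.Theory Num.Theory.

Definition is_signed_perm (n : nat) (w : n.-tuple int) : bool :=
  perm_eq (map absz w) (iota 1 n).

Definition piB (n : nat) (w : n.-tuple int) (i : nat) : int :=
  if i is i'.+1 then nth 0%R w i' else 0%R.

Definition varsigmaB (n : nat) (w : n.-tuple int) : nat :=
  nat_of_bool (piB w 1 < 0)%R.

Definition peB (n : nat) (w : n.-tuple int) : nat :=
  count (fun i => (piB w i.-1 < piB w i)%R && (piB w i.+1 < piB w i)%R)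
        (iota 1 n.-1).

(* The totally ordered set Z_k = {0 < -1 < 1 < -2 < 2 < ... < -k < k} is
   encoded order-preservingly by 'I_(2k+1):  0 |-> 0, \bar j |-> 2j-1,
   j |-> 2j.  Plus-type elements (0 and unbarred j) are the even codes,
   minus-type elements (barred \bar j) are the odd codes. *)
Definition Zk (k : nat) := 'I_(2 * k).+1.
Definition plus_type (z : nat) : bool := ~~ odd z.
Definition minus_type (z : nat) : bool := odd z.

Definition aB (n k : nat) (a : n.-tuple (Zk k)) (s : nat) : nat :=
  if s is s'.+1 then nth 0%N (map val a) s' else 0%N.

Definition compatible (n k : nat) (w : n.-tuple int) (a : n.-tuple (Zk k)) : bool :=
  [forall s : 'I_n,
     [&& aB a s <= aB a s.+1,
         (piB w s < piB w s.+1)%R ==>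
            (aB a s < aB a s.+1) || ((aB a s == aB a s.+1) && plus_type (aB a s)) &
         (piB w s.+1 < piB w s)%R ==>
            (aB a s < aB a s.+1) || ((aB a s == aB a s.+1) && minus_type (aB a s))]].

Definition OmegaB (n : nat) (w : n.-tuple int) (k : nat) : nat :=
  #|[set a : n.-tuple (Zk k) | compatible w a]|.

(* Classify the compatible sequences by their last entry.  If [G z] counts those
   ending at the code [z], appending a letter gives
   [G' z = \sum_(x < z) G x + [z has the right type] * G z],
   the right type being plus after an ascent and minus after a descent.  Let [E]
   and [O] be the generating functions, level [j] weighted by [t ^ j], of the
   sequences ending at [j] and at [\bar j], and [S = (E + O) / (1 - t)] that of
   [k |-> Omega'_B(pi; k)].  An ascent maps [(E, O)] to [(S, t S)] and a descent
   to [(t S + O, t S + O)].  By induction [E + O] is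
   [((1 + t) / (1 - t)) ^ n (2 t / (1 + t)) ^ varsigma (4 t / (1 + t) ^ 2) ^ pe],
   with [O] the fraction [t / (1 + t)] or [1 / 2] of it according as the word
   ends with an ascent or a descent.  For [|t| < 1] every series involved
   converges absolutely, which is what the passage to prefix sums needs. *)

From mathcomp Require Import all_boot all_order all_algebra.
From mathcomp Require Import all_classical all_reals all_analysis.
From mathcomp Require Import zify ring.
Import Order.TTheory GRing.Theory Num.Theory.
Import numFieldNormedType.Exports.

Set Implicit Arguments.
Unset Strict Implicit.
Unset Printing Implicit Defensive.

Definition compatible_step (p q : int) (x y : nat) : bool :=
  [&& x <= y,
      (p < q)%R ==> (x < y) || ((x == y) && plus_type x) &
      (q < p)%R ==> (x < y) || ((x == y) && minus_type x)].

(* [ending_count rw z] counts the compatible sequences of the word [rev rw]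
   ending at the code [z]; in [q :: l] the letter preceding [q] is [head 0 l],
   which is pi(0) = 0 when [l] is empty. *)
Fixpoint ending_count (rw : seq int) (z : nat) : nat :=
  if rw is q :: l then \sum_(x < z.+1) compatible_step (head 0%R l) q x z * ending_count l x
  else z == 0.

Lemma card_set_sum (T : finType) (P : pred T) : #|[set a | P a]| = \sum_a P a.
Proof. by rewrite -[LHS]muln1 -sum_nat_cond_const big_mkcond. Qed.

Lemma sum_ord_mul_eq m (F : nat -> nat) (v : nat) :
  \sum_(x < m) F x * (x == v :> nat) = (v < m) * F v.
Proof.
have [vm|mv] := ltnP v m.
  rewrite (bigD1 (Ordinal vm)) //= eqxx muln1 big1 ?addn0 ?mul1n // => i.
  by rewrite -val_eqE /= => /negbTE ->; rewrite muln0.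
rewrite big1 ?mul0n // => i _; case: eqP => [iv|]; last by rewrite muln0.
by move: (ltn_ord i); rewrite iv ltnNge mv.
Qed.

Lemma tuple_rconsP (T : Type) n (w : n.+1.-tuple T) :
  {w' : n.-tuple T & {q : T | w = [tuple of rcons w' q]}}.
Proof.
exists [tuple of belast (thead w) (behead w)], (last (thead w) (behead w)).
by apply: val_inj => /=; rewrite -lastI; case/tupleP: w => h s; rewrite theadE.
Qed.

Lemma sum_tuple_rcons (T : finType) n (F : n.+1.-tuple T -> nat) :
  \sum_(a : n.+1.-tuple T) F a = \sum_(b : n.-tuple T) \sum_(y : T) F [tuple of rcons b y].
Proof.
rewrite pair_big /=.
rewrite (reindex (fun p : n.-tuple T * T => [tuple of rcons p.1 p.2])) //=.
exists (fun a => let: existT b (exist y _) := tuple_rconsP a in (b, y)).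
- move=> [b y] _ /=; case: tuple_rconsP => b' [y' /(congr1 val) /= e].
  by have [/val_inj -> ->] := rcons_inj e.
- by move=> a _; case: tuple_rconsP => b [y ->].
Qed.

Section Rcons.
Variables (n k : nat) (w : n.-tuple int) (q : int) (b : n.-tuple (Zk k)) (y : Zk k).

Lemma piB_rcons i : i <= n -> piB [tuple of rcons w q] i = piB w i.
Proof. by case: i => //= i lt_in; rewrite nth_rcons size_tuple lt_in. Qed.

Lemma piB_rcons_last : piB [tuple of rcons w q] n.+1 = q.
Proof. by rewrite /= nth_rcons size_tuple ltnn eqxx. Qed.

Lemma aB_rcons i : i <= n -> aB [tuple of rcons b y] i = aB b i.
Proof. by case: i => //= i lt_in; rewrite map_rcons nth_rcons size_map size_tuple lt_in. Qed.

Lemma aB_rcons_last : aB [tuple of rcons b y] n.+1 = y.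
Proof. by rewrite /= map_rcons nth_rcons size_map size_tuple ltnn eqxx. Qed.

Lemma compatible_rcons :
  compatible [tuple of rcons w q] [tuple of rcons b y] =
  compatible w b && compatible_step (piB w n) q (aB b n) y.
Proof.
have lastE := (piB_rcons (leqnn n), piB_rcons_last, aB_rcons (leqnn n), aB_rcons_last).
apply/forallP/andP => [H|[/forallP H1 H2] s].
  split; last by have := H ord_max; rewrite !lastE.
  apply/forallP => s; have lt_sn : s < n := ltn_ord s.
  have := H (widen_ord (leqnSn n) s).
  by rewrite !piB_rcons ?aB_rcons //; apply: ltnW.
have [lt_sn|] := ltnP s n.
  by have := H1 (Ordinal lt_sn); rewrite !piB_rcons ?aB_rcons //; apply: ltnW.
rewrite leq_eqVlt ltnNge -ltnS ltn_ord orbF => /eqP <-.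
by rewrite !lastE.
Qed.

End Rcons.

Lemma piB_last n (w : n.-tuple int) : piB w n = head 0%R (rev w).
Proof.
case: n w => [|n] w; first by rewrite tuple0.
by rewrite -nth0 nth_rev size_tuple //= subn1.
Qed.

Lemma varsigmaB_rcons n (w : n.-tuple int) q :
  varsigmaB [tuple of rcons w q] = varsigmaB w + ((n == 0) && (q < 0)%R).
Proof. by case: n w => [|n] w; rewrite ?tuple0 // /varsigmaB piB_rcons //= addn0. Qed.

Lemma peB_rcons n (w : n.-tuple int) q :
  peB [tuple of rcons w q] = peB w + ((piB w n.-1 < piB w n)%R && (q < piB w n)%R).
Proof.
case: n w => [|n] w; first by rewrite tuple0.
have iotaS : iota 1 n.+1 = iota 1 n ++ [:: n.+1] by rewrite -[in LHS](addn1 n) iotaD.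
have count1 (P : pred nat) x : count P [:: x] = P x by rewrite /= addn0.
rewrite /peB -[n.+2.-1]/n.+1 iotaS count_cat count1.
congr (_ + _); last first.
  rewrite -[n.+1.-1]/n (piB_rcons w q (leqnSn n)) (piB_rcons w q (leqnn n.+1)).
  by rewrite piB_rcons_last.
apply: eq_in_count => i; rewrite mem_iota add1n => /andP[_ lt_in].
have le_in1 : i <= n.+1 := leqW lt_in.
by rewrite !(piB_rcons w q) // (leq_trans (leq_pred i)).
Qed.

Definition no_plateau n (w : n.-tuple int) : Prop :=
  forall i, i < n -> piB w i != piB w i.+1.

Lemma signed_perm_no_plateau n (w : n.-tuple int) : is_signed_perm w -> no_plateau w.
Proof.
move=> w_perm i lt_in.
have abs_uniq : uniq (map absz w) by rewrite (perm_uniq w_perm) iota_uniq.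
have abs_neq0 j : j < n -> absz (nth 0%R w j) != 0.
  move=> lt_jn; apply: contraTneq isT => abs0.
  have : 0 \in map absz w by rewrite -abs0 map_f // mem_nth ?size_tuple.
  by rewrite (perm_mem w_perm) mem_iota.
case: i lt_in => [|i] lt_in /=; first by apply: contraTneq (abs_neq0 _ lt_in) => <-.
apply: contraTneq abs_uniq => eq_ii1.
apply/(uniqPn 0); exists i, i.+1; rewrite ltnSn size_map size_tuple lt_in.
by rewrite !(nth_map 0%R) ?size_tuple ?(ltnW lt_in) ?lt_in // eq_ii1.
Qed.

Lemma no_plateau_rcons n (w : n.-tuple int) q :
  no_plateau [tuple of rcons w q] -> no_plateau w /\ piB w n != q.
Proof.
move=> npl; split=> [i lt_in|].
  by have := npl i (leqW lt_in); rewrite !piB_rcons // ltnW.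
by have := npl n (ltnSn n); rewrite piB_rcons // piB_rcons_last.
Qed.

Lemma sum_compatible_last n (w : n.-tuple int) k z : z <= 2 * k ->
  \sum_(a : n.-tuple (Zk k)) (compatible w a && (aB a n == z)) = ending_count (rev w) z.
Proof.
elim: n w z => [|n IH] w z le_z2k.
  rewrite tuple0 /= (eq_bigr (fun _ => nat_of_bool (z == 0))); last first.
    by move=> a _; rewrite eq_sym (_ : compatible _ a) //; apply/forallP => -[].
  by rewrite sum_nat_const card_tuple expn0 mul1n.
have [w' [q ->]] := tuple_rconsP w.
rewrite sum_tuple_rcons rev_rcons [RHS]/= -piB_last.
under [LHS]eq_bigr => b _.
  under eq_bigr => y _ do rewrite compatible_rcons aB_rcons_last -mulnb -mulnb.
  rewrite (sum_ord_mul_eq _ (fun y => compatible w' b * compatible_step (piB w' n) q (aB b n) y)).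
  rewrite ltnS le_z2k mul1n.
  over.
under [RHS]eq_bigr => x _.
  rewrite -IH; last by rewrite (leq_trans _ le_z2k) // -ltnS.
  rewrite big_distrr /=.
  under eq_bigr => b _ do rewrite -mulnb mulnA.
  over.
rewrite exchange_big /=; apply: eq_bigr => b _.
under eq_bigr => x _ do rewrite eq_sym.
rewrite (sum_ord_mul_eq _ (fun x => compatible_step (piB w' n) q x z * compatible w' b)).
case: (boolP (compatible_step _ _ _ _)) => [/and3P[le_bz _ _]|_]; last by rewrite !muln0.
by rewrite ltnS le_bz mul1n muln1 mul1n.
Qed.

Lemma aB_last_lt n k (a : n.-tuple (Zk k)) : aB a n < (2 * k).+1.
Proof. by case: n a => [|n] a //=; rewrite (nth_map ord0) ?size_tuple. Qed.

Lemma OmegaB_ending_count n (w : n.-tuple int) k :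
  OmegaB w k = \sum_(z < (2 * k).+1) ending_count (rev w) z.
Proof.
under [RHS]eq_bigr => z _ do rewrite -(sum_compatible_last w (ltn_ord z)).
rewrite /OmegaB card_set_sum exchange_big; apply: eq_bigr => a _.
under eq_bigr => z _ do rewrite -mulnb eq_sym.
by rewrite (sum_ord_mul_eq _ (fun=> compatible w a)) aB_last_lt mul1n.
Qed.

Lemma ending_count_cons q l z : head 0%R l != q ->
  ending_count (q :: l) z = \sum_(x < z) ending_count l x
     + (if (head 0%R l < q)%R then plus_type z else minus_type z) * ending_count l z.
Proof.
move=> neq_pq; rewrite /= big_ord_recr /=; congr (_ + _).
  apply: eq_bigr => x _; rewrite /compatible_step ltn_ord (ltnW (ltn_ord x)).
  by rewrite !implybT mul1n.
rewrite /compatible_step leqnn ltnn eqxx /=.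
by case: ltgtP neq_pq; rewrite ?andbT.
Qed.

Definition prefix_sum (c : nat -> nat) (k : nat) : nat := \sum_(j < k.+1) c j.
Definition delay (c : nat -> nat) (k : nat) : nat := if k is k'.+1 then c k' else 0.

Definition ending_plus (rw : seq int) (j : nat) : nat := ending_count rw (2 * j).
Definition ending_minus (rw : seq int) (j : nat) : nat :=
  if j is j'.+1 then ending_count rw (2 * j').+1 else 0.

Lemma ending_minusS rw j : ending_minus rw j.+1 = ending_count rw (2 * j).+1.
Proof. by []. Qed.

Definition ending_upto (rw : seq int) (j : nat) : nat :=
  \sum_(x < (2 * j).+1) ending_count rw x.

Lemma ending_uptoE rw :
  ending_upto rw =1 prefix_sum (fun j => ending_plus rw j + ending_minus rw j).
Proof.
elim=> [|j IH]; first by rewrite /ending_upto /prefix_sum !big_ord1 addn0.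
rewrite /prefix_sum in IH *; rewrite big_ord_recr /= -IH /ending_upto.
by rewrite /ending_plus mulnS add2n !big_ord_recr /=; lia.
Qed.

Lemma ending_ascent q l : (head 0%R l < q)%R ->
  ending_plus (q :: l) =1 ending_upto l /\
  ending_minus (q :: l) =1 delay (ending_upto l).
Proof.
move=> lt_pq; have neq_pq : head 0%R l != q by rewrite lt_eqF.
split=> [j|[|j] //].
  rewrite /ending_plus ending_count_cons // lt_pq /plus_type oddM mul1n.
  by rewrite /ending_upto big_ord_recr.
by rewrite ending_minusS ending_count_cons // lt_pq /plus_type oddS oddM /= addn0.
Qed.

Lemma ending_descent q l : (q < head 0%R l)%R ->
  ending_plus (q :: l) =1 (fun j => delay (ending_upto l) j + ending_minus l j) /\
  ending_minus (q :: l) =1 (fun j => delay (ending_upto l) j + ending_minus l j).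
Proof.
move=> lt_qp; have neq_pq : head 0%R l != q by rewrite gt_eqF.
have nlt_pq : (head 0%R l < q)%R = false by rewrite lt_gtF.
split=> [[|j]|[|j] //].
- by rewrite /ending_plus ending_count_cons // nlt_pq big_ord0.
- rewrite /ending_plus ending_count_cons // nlt_pq /minus_type mulnS add2n !oddS oddM /=.
  by rewrite mul0n addn0 /ending_upto big_ord_recr.
- by rewrite !ending_minusS ending_count_cons // nlt_pq /minus_type oddS oddM mul1n.
Qed.

Local Open Scope classical_set_scope.
Local Open Scope ring_scope.

Section GeneratingSeries.
Variable R : realType.
Implicit Types (x v u : R) (c d : nat -> nat).

Definition gseries x c (N : nat) : R := \sum_(k < N) (c k)%:R * x ^+ k.

Lemma gseries_series x c : gseries x c = series (fun k => (c k)%:R * x ^+ k).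
Proof. by rewrite seriesEord. Qed.

Lemma eq_gseries x c d : c =1 d -> gseries x c = gseries x d.
Proof. by move=> cd; apply/funext => N; apply: eq_bigr => k _; rewrite cd. Qed.

Lemma gseriesD x c d : gseries x (fun k => c k + d k)%N = gseries x c \+ gseries x d.
Proof.
by apply/funext => N; rewrite /= -big_split; apply: eq_bigr => k _; rewrite natrD mulrDl.
Qed.

Lemma gseries_delayS x c N : gseries x (delay c) N.+1 = x * gseries x c N.
Proof.
rewrite /gseries big_ord_recl mul0r add0r mulr_sumr.
by apply: eq_bigr => k _; rewrite exprS mulrCA.
Qed.

Lemma gseries_prefix_sum x c N :
  (1 - x) * gseries x (prefix_sum c) N = gseries x c N - (\sum_(j < N) c j)%:R * x ^+ N.
Proof.
elim: N => [|N IH]; first by rewrite /gseries !big_ord0 mulr0 mul0r subr0.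
rewrite /gseries !big_ord_recr /= mulrDr -/(gseries x (prefix_sum c) N) IH.
by rewrite /prefix_sum big_ord_recr /= !natrD exprS /gseries; ring.
Qed.

Lemma nondecreasing_gseries x c : 0 <= x -> nondecreasing_seq (gseries x c).
Proof.
move=> x_ge0; apply/nondecreasing_seqP => N; rewrite /gseries big_ord_recr /=.
by rewrite lerDl mulr_ge0 // exprn_ge0.
Qed.

Lemma cvgn_gseries_prefix_sum x c : 0 <= x < 1 ->
  cvgn (gseries x c) -> cvgn (gseries x (prefix_sum c)).
Proof.
move=> /andP[x_ge0 x_lt1] cvg_c; apply: nondecreasing_is_cvgn.
  exact: nondecreasing_gseries.
exists (limn (gseries x c) / (1 - x)) => _ [N _ <-].
rewrite ler_pdivlMr ?subr_gt0 // mulrC gseries_prefix_sum lerBlDr.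
apply: le_trans (nondecreasing_cvgn_le (nondecreasing_gseries c x_ge0) cvg_c N) _.
by rewrite lerDl mulr_ge0 // exprn_ge0.
Qed.

(* Convergence at [`|x|] is carried along because it is what makes the tail
   [(\sum_(j < N) c j) * x ^+ N] vanish in [has_gf_prefix_sum]. *)
Definition has_gf x c v := gseries x c @ \oo --> v /\ cvgn (gseries `|x| c).

Lemma eq_has_gf x c d v : c =1 d -> has_gf x c v -> has_gf x d v.
Proof. by move=> cd; rewrite /has_gf !(eq_gseries _ cd). Qed.

Lemma has_gfD x c d v u :
  has_gf x c v -> has_gf x d u -> has_gf x (fun k => c k + d k)%N (v + u).
Proof.
move=> [cv_c abs_c] [cv_d abs_d]; rewrite /has_gf !gseriesD.
by split; [exact: cvgD | exact: is_cvgD].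
Qed.

Lemma has_gf_delay x c v : has_gf x c v -> has_gf x (delay c) (x * v).
Proof.
have delayE y : (fun N => gseries y (delay c) N.+1) = (fun N => y * gseries y c N).
  by apply/funext => N; exact: gseries_delayS.
move=> [cv_c /cvg_ex[u abs_c]]; split; last apply/cvg_ex; last exists (`|x| * u).
  by rewrite -cvg_shiftS /= delayE; exact: cvgMl_tmp.
by rewrite -cvg_shiftS /= delayE; exact: cvgMl_tmp.
Qed.

Lemma has_gf_prefix_sum x c v : `|x| < 1 ->
  has_gf x c v -> has_gf x (prefix_sum c) (v / (1 - x)).
Proof.
move=> abs_x_lt1 [cv_c abs_c].
have abs_pre : cvgn (gseries `|x| (prefix_sum c)).
  by apply: cvgn_gseries_prefix_sum; rewrite // normr_ge0.
have tail0 : (fun N => (\sum_(j < N) c j)%:R * x ^+ N) @ \oo --> 0.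
  rewrite -cvg_shiftS /=; apply: norm_cvg0.
  under eq_cvg do rewrite normrM normr_nat normrX exprS mulrCA.
  have : cvgn (series (fun N => (prefix_sum c N)%:R * `|x| ^+ N)).
    by rewrite -gseries_series.
  by move/cvg_series_cvg_0/(cvgMl_tmp (a := `|x|)); rewrite mulr0.
split=> //.
have Bx_neq0 : 1 - x != 0.
  by rewrite subr_eq0 eq_sym lt_eqF // (le_lt_trans (ler_norm x)).
have -> : gseries x (prefix_sum c) =
          (fun N => (gseries x c N - (\sum_(j < N) c j)%:R * x ^+ N) / (1 - x)).
  by apply/funext => N; rewrite -gseries_prefix_sum [_ * gseries _ _ _]mulrC mulfK.
by rewrite -[v]subr0; apply: cvgMr_tmp; exact: cvgB.
Qed.

Lemma has_gf_indicator0 x : has_gf x (fun k => (k == 0)%N : nat) 1.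
Proof.
have indicatorE y :
    gseries y (fun k => (k == 0)%N : nat) = fun N => if N is 0 then 0 else 1.
  apply/funext => -[|N]; rewrite /gseries ?big_ord0 // big_ord_recl big1 => [|k _].
    by rewrite addr0 expr0 mulr1.
  by rewrite mul0r.
rewrite /has_gf !indicatorE; split; last apply/cvg_ex; last exists 1.
  all: by rewrite -cvg_shiftS; exact: cvg_cst.
Qed.

Lemma has_gf0 x : has_gf x (fun=> 0%N) 0.
Proof.
have zeroE y : gseries y (fun=> 0%N) = fun=> 0.
  by apply/funext => N; rewrite /gseries big1 // => k _; rewrite mul0r.
rewrite /has_gf !zeroE.
by split; [exact: cvg_cst | exact: is_cvg_cst].
Qed.

End GeneratingSeries.

Section ClosedForm.
Variables (R : realType) (t : R).
Hypothesis t_lt1 : `|t| < 1.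

Lemma oneDt_neq0 : 1 + t != 0.
Proof.
by rewrite addrC addr_eq0; apply: contraTneq t_lt1 => ->; rewrite normrN normr1 ltxx.
Qed.

Lemma oneBt_neq0 : 1 - t != 0.
Proof. by rewrite subr_eq0 eq_sym lt_eqF // (le_lt_trans (ler_norm t)). Qed.

Definition gf_closed n (w : n.-tuple int) : R :=
  ((1 + t) / (1 - t)) ^+ n * (2 * t / (1 + t)) ^+ varsigmaB w
    * (4 * t / (1 + t) ^+ 2) ^+ peB w.

(* The fraction of [gf_closed w] contributed by sequences ending at a barred letter. *)
Definition minus_share n (w : n.-tuple int) : R :=
  if n is 0 then 0 else if (piB w n.-1 < piB w n)%R then t / (1 + t) else 2^-1.

Lemma gf_closed_ascent n (w : n.-tuple int) q : (piB w n < q)%R ->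
  gf_closed [tuple of rcons w q] = (1 + t) / (1 - t) * gf_closed w.
Proof.
move=> lt_wq; rewrite /gf_closed varsigmaB_rcons peB_rcons (lt_gtF lt_wq) andbF addn0.
case: n w lt_wq => [|n] w lt_wq; last by rewrite addn0 exprS !mulrA.
by rewrite tuple0 /= in lt_wq *; rewrite ltNge (ltW lt_wq) addn0 expr1 expr0 !mulr1.
Qed.

Lemma gf_closed_descent n (w : n.-tuple int) q : (q < piB w n)%R ->
  gf_closed [tuple of rcons w q] = 2 * (t / (1 - t) + minus_share w) * gf_closed w.
Proof.
move=> lt_qw; rewrite /gf_closed /minus_share varsigmaB_rcons peB_rcons lt_qw andbT.
case: n w lt_qw => [|n] w lt_qw.
  rewrite tuple0 /= in lt_qw *; rewrite lt_qw /= !expr0 !mulr1 !expr1; field.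
  by rewrite oneBt_neq0 oneDt_neq0.
case: ifP => _ /=; rewrite ?addn0 ?addn1 ?exprS ?expr0 ?mulr1; field.
all: by rewrite ?oneBt_neq0 ?oneDt_neq0 ?expf_neq0.
Qed.

Lemma minus_share_rcons n (w : n.-tuple int) q :
  minus_share [tuple of rcons w q] = if (piB w n < q)%R then t / (1 + t) else 2^-1.
Proof. by rewrite /minus_share -[n.+1.-1]/n piB_rcons // piB_rcons_last. Qed.

Lemma has_gf_ending_upto l e o :
  has_gf t (ending_plus l) e -> has_gf t (ending_minus l) o ->
  has_gf t (ending_upto l) ((e + o) / (1 - t)).
Proof.
move=> gf_plus gf_minus; apply: eq_has_gf (fun j => esym (ending_uptoE l j)) _.
exact/has_gf_prefix_sum/has_gfD.
Qed.

Lemma has_gf_ending_ascent q l e o : (head 0 l < q)%R ->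
  has_gf t (ending_plus l) e -> has_gf t (ending_minus l) o ->
  has_gf t (ending_plus (q :: l)) ((e + o) / (1 - t)) /\
  has_gf t (ending_minus (q :: l)) (t * ((e + o) / (1 - t))).
Proof.
move=> lt_pq gf_plus gf_minus; have gf_upto := has_gf_ending_upto gf_plus gf_minus.
have [plusE minusE] := ending_ascent lt_pq.
by split; apply: eq_has_gf (fsym _) _; [exact: plusE | exact: gf_upto
  | exact: minusE | exact: has_gf_delay].
Qed.

Lemma has_gf_ending_descent q l e o : (q < head 0 l)%R ->
  has_gf t (ending_plus l) e -> has_gf t (ending_minus l) o ->
  has_gf t (ending_plus (q :: l)) (t * ((e + o) / (1 - t)) + o) /\
  has_gf t (ending_minus (q :: l)) (t * ((e + o) / (1 - t)) + o).
Proof.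
move=> lt_qp gf_plus gf_minus; have gf_upto := has_gf_ending_upto gf_plus gf_minus.
have gf_sum := has_gfD (has_gf_delay gf_upto) gf_minus.
have [plusE minusE] := ending_descent lt_qp.
by split; apply: eq_has_gf (fsym _) gf_sum.
Qed.

Lemma has_gf_ending n (w : n.-tuple int) : no_plateau w ->
  has_gf t (ending_plus (rev w)) ((1 - minus_share w) * gf_closed w) /\
  has_gf t (ending_minus (rev w)) (minus_share w * gf_closed w).
Proof.
elim: n w => [|n IH] w.
  rewrite tuple0 /minus_share /gf_closed /= !expr0 subr0 !mulr1 => _.
  split; last by apply: eq_has_gf (has_gf0 t); case.
  by apply: eq_has_gf (has_gf_indicator0 t) => j; rewrite /ending_plus /= muln_eq0.
have [w' [q ->]] := tuple_rconsP w.
move=> /no_plateau_rcons[/IH[gf_plus gf_minus] neq_wq].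
rewrite rev_rcons minus_share_rcons.
set Q := gf_closed w'; set s := minus_share w'.
have sumE : (1 - s) * Q + s * Q = Q by rewrite -mulrDl subrK mul1r.
case: ltgtP neq_wq => [lt_wq|lt_qw|//] _.
  rewrite gf_closed_ascent // -/Q; rewrite piB_last in lt_wq.
  have [] := has_gf_ending_ascent lt_wq gf_plus gf_minus; rewrite sumE.
  have -> : (1 - t / (1 + t)) * ((1 + t) / (1 - t) * Q) = Q / (1 - t).
    by field; rewrite ?oneBt_neq0 ?oneDt_neq0.
  have -> : t / (1 + t) * ((1 + t) / (1 - t) * Q) = t * (Q / (1 - t)).
    by field; rewrite ?oneBt_neq0 ?oneDt_neq0.
  by split.
rewrite gf_closed_descent // -/Q -/s; rewrite piB_last in lt_qw.
have [] := has_gf_ending_descent lt_qw gf_plus gf_minus; rewrite sumE.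
have -> : (1 - 2^-1) * (2 * (t / (1 - t) + s) * Q) = t * (Q / (1 - t)) + s * Q.
  by field; rewrite ?oneBt_neq0 ?oneDt_neq0.
have -> : 2^-1 * (2 * (t / (1 - t) + s) * Q) = t * (Q / (1 - t)) + s * Q.
  by field; rewrite ?oneBt_neq0 ?oneDt_neq0.
by split.
Qed.

Lemma has_gf_OmegaB n (w : n.-tuple int) :
  is_signed_perm w -> has_gf t (OmegaB w) (gf_closed w / (1 - t)).
Proof.
move=> /signed_perm_no_plateau/has_gf_ending[gf_plus gf_minus].
have := has_gf_ending_upto gf_plus gf_minus; rewrite -mulrDl subrK mul1r.
by apply: eq_has_gf => k; rewrite OmegaB_ending_count.
Qed.

End ClosedForm.

Unset Implicit Arguments.

Theorem theorem4p12 (R : realType) (n : nat) (w : n.-tuple int)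
  (hw : is_signed_perm w) (t : R) (ht : `|t| < 1) :
  ((fun N : nat => \sum_(k < N) (OmegaB w k)%:R * t ^+ k) @ \oo -->
     (1 + t) ^+ n / (1 - t) ^+ n.+1 * (2 * t / (1 + t)) ^+ varsigmaB w
       * (4 * t / (1 + t) ^+ 2) ^+ peB w)
  /\
  (1 + t) ^+ n / (1 - t) ^+ n.+1 * (2 * t / (1 + t)) ^+ varsigmaB w
       * (4 * t / (1 + t) ^+ 2) ^+ peB w
  = (2^-1) ^+ varsigmaB w * ((1 + t) ^+ (n + varsigmaB w) / (1 - t) ^+ n.+1)
       * (4 * t / (1 + t) ^+ 2) ^+ (peB w + varsigmaB w).
Proof.
have [Dt_neq0 Bt_neq0] := (oneDt_neq0 ht, oneBt_neq0 ht).
split.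
  have [gf_Omega _] := has_gf_OmegaB ht hw.
  suff <- : gf_closed t w / (1 - t) = (1 + t) ^+ n / (1 - t) ^+ n.+1
      * (2 * t / (1 + t)) ^+ varsigmaB w * (4 * t / (1 + t) ^+ 2) ^+ peB w by [].
  rewrite /gf_closed expr_div_n [(1 - t) ^+ n.+1]exprS.
  move: (_ ^+ varsigmaB w) (_ ^+ peB w) ((1 + t) ^+ n) => A B C.
  by field; rewrite ?expf_neq0 ?Bt_neq0.
rewrite /varsigmaB; case: (piB w 1 < 0)%R; rewrite ?addn1 ?addn0 ?exprS ?expr0 ?expr1; field.
all: by rewrite ?expf_neq0 ?Bt_neq0 ?Dt_neq0.
Qed.
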